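(* Let $n\in\mathbb{N}$ and let $K\subset\mathbb{R}^n$ be a strictly convex convex body (not necessarily $0$-symmetric). Then \[ G(K)\le 2\bigl(2^{n-1}-1\bigr)\left\lceil \tfrac{2}{3}\bigl(G(\operatorname{int}K)+1\bigr)\right\rceil + G(\operatorname{int}K)+2. \]
   Context: A convex body in $\mathbb{R}^n$ is a compact convex set with nonempty interior. It is strictly convex if its boundary contains no nondegenerate line segment. For $S\subset\mathbb{R}^n$, $G(S)=|S\cap\mathbb{Z}^n|$, and $\operatorname{int}K$ denotes the interior of $K$. $\lceil x\rceil$ is the smallest integer $\ge x$. *)

From Stdlib Require Import Reals Lra Lia ZArith List.
Open Scope R_scope.

(* Points of R^n are modelled as functions nat -> R vanishing at indices >= n. *)
Definition point := nat -> R.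

Definition inRn (n : nat) (x : point) : Prop :=
  forall i : nat, (n <= i)%nat -> x i = 0.

Fixpoint sqdist (n : nat) (x y : point) : R :=
  match n with
  | O => 0
  | S m => sqdist m x y + (x m - y m) ^ 2
  end.

Definition seg (x y : point) (t : R) : point := fun i => t * x i + (1 - t) * y i.

Definition is_convex (n : nat) (K : point -> Prop) : Prop :=
  forall x y t, K x -> K y -> 0 <= t <= 1 -> K (seg x y t).

Definition is_bounded (n : nat) (K : point -> Prop) : Prop :=
  exists M : R, forall x, K x -> sqdist n x (fun _ => 0) <= M.

Definition is_closed (n : nat) (K : point -> Prop) : Prop :=
  forall x, inRn n x ->
    (forall eps, 0 < eps -> exists y, K y /\ sqdist n x y < eps) -> K x.

Definition int_pts (n : nat) (K : point -> Prop) (x : point) : Prop :=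
  inRn n x /\ exists eps, 0 < eps /\
    forall y, inRn n y -> sqdist n x y < eps -> K y.

Definition convex_body (n : nat) (K : point -> Prop) : Prop :=
  (forall x, K x -> inRn n x) /\ is_convex n K /\ is_bounded n K /\
  is_closed n K /\ exists x, int_pts n K x.

Definition boundary (n : nat) (K : point -> Prop) (x : point) : Prop :=
  K x /\ ~ int_pts n K x.

Definition strictly_convex (n : nat) (K : point -> Prop) : Prop :=
  forall x y, x <> y ->
    ~ (forall t, 0 <= t <= 1 -> boundary n K (seg x y t)).

Definition lattice_point (n : nat) (x : point) : Prop :=
  inRn n x /\ forall i, (i < n)%nat -> exists z : Z, x i = IZR z.

Definition card (P : point -> Prop) (m : nat) : Prop :=
  exists l : list point, NoDup l /\ length l = m /\ forall x, List.In x l <-> P x.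

Definition G_eq (n : nat) (S : point -> Prop) (m : nat) : Prop :=
  card (fun x => lattice_point n x /\ S x) m.

(* ceiling: up x is the integer with x < up x <= x + 1, so floor y = up y - 1
   and ceil x = - floor (- x) = 1 - up (- x). *)
Definition Rceil (x : R) : Z := (1 - up (- x))%Z.

From Stdlib Require Import Reals ZArith.
From Stdlib Require Import Lra Lia List Classical FunctionalExtensionality Sorting.Sorted.
Import ListNotations.
Open Scope R_scope.

(* Split the lattice points of K into the 2^n classes of Z^n modulo 2. Two distinct points of one
   class have a lattice midpoint, which is interior by strict convexity. Listing a class of m points
   lexicographically as x1 < ... < xm, the midpoints of (x1,x2), (x1,x3), (x2,x3), (x2,x4), (x3,x4), ...
   increase strictly, so 2m - 3 <= G(int K). Hence G(K) <= 2^n * floor((G(int K) + 3) / 2), and by one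
   less when G(int K) is odd: a class attaining the bound is determined by the interior lattice points
   (its least point is m12 + m13 - m23 for the three least of them, or the class is that of the unique
   interior lattice point), so two classes cannot both attain it. The stated bound follows from
   floor((G(int K) + 3) / 2) <= ceil(2/3 (G(int K) + 1)). *)

Definition mid (x y : point) : point := seg x y (1/2).

Lemma sqdist_xx n x : sqdist n x x = 0.
Proof. induction n as [|n IH]; simpl; [reflexivity | rewrite IH; ring]. Qed.

Lemma sqdist_scale n (x y x' y' : point) c :
  (forall i, (i < n)%nat -> x i - y i = c * (x' i - y' i)) ->
  sqdist n x y = c ^ 2 * sqdist n x' y'.
Proof.
  induction n as [|n IH]; intros H; simpl; [ring|].
  rewrite IH by (intros; apply H; lia). rewrite (H n) by lia. ring.
Qed.

Lemma int_pts_sub n K x : int_pts n K x -> K x.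
Proof. intros [Hx [eps [Heps HK]]]. apply HK; [exact Hx | rewrite sqdist_xx; lra]. Qed.

Lemma int_pts_seg n K w y s :
  (forall x, K x -> inRn n x) -> is_convex n K ->
  int_pts n K w -> K y -> 0 <= s < 1 -> int_pts n K (seg y w s).
Proof.
  intros HKn Hconv [Hwn [eps [Heps Hball]]] Hy Hs.
  assert (Hyn := HKn y Hy).
  split.
  { intros i Hi. unfold seg. rewrite (Hwn i Hi), (Hyn i Hi). ring. }
  exists ((1 - s) ^ 2 * eps). split; [apply Rmult_lt_0_compat; nra|].
  intros v Hv Hvd.
  (* v = seg y u s, where u is the image of v under the homothety of centre y and ratio 1/(1-s) *)
  set (u := fun i => (v i - s * y i) / (1 - s)).
  assert (Hu : K u).
  { apply Hball.
    - intros i Hi. unfold u. rewrite (Hv i Hi), (Hyn i Hi). field. lra.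
    - rewrite (sqdist_scale n w u (seg y w s) v (1 / (1 - s)))
        by (intros i _; unfold u, seg; field; lra).
      replace eps with ((1 / (1 - s)) ^ 2 * ((1 - s) ^ 2 * eps)) by (field; lra).
      apply Rmult_lt_compat_l; [apply pow_lt; apply Rdiv_lt_0_compat|]; lra. }
  replace v with (seg y u s)
    by (apply functional_extensionality; intro i; unfold seg, u; field; lra).
  apply Hconv; [exact Hy | exact Hu | lra].
Qed.

Lemma strictly_convex_mid_int n K x y :
  convex_body n K -> strictly_convex n K -> K x -> K y -> x <> y ->
  int_pts n K (mid x y).
Proof.
  intros [HKn [Hconv _]] Hsc Hx Hy Hxy.
  apply NNPP; intro Hmid.
  apply (Hsc x y Hxy). intros t Ht.
  split; [apply Hconv; auto|].
  intro Hint. apply Hmid. unfold mid.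
  (* the midpoint lies between an endpoint and the interior point seg x y t *)
  destruct (Rle_lt_dec (1/2) t) as [Ht2|Ht2].
  - replace (seg x y (1/2)) with (seg y (seg x y t) (1 - 1 / (2 * t)))
      by (apply functional_extensionality; intro i; unfold seg; field; lra).
    apply int_pts_seg; auto.
    assert (1 / (2 * t) <= 1) by (apply Rmult_le_reg_r with (2 * t); [lra|];
      unfold Rdiv; rewrite Rmult_assoc, Rinv_l by lra; lra).
    assert (0 < 1 / (2 * t)) by (apply Rdiv_lt_0_compat; lra). lra.
  - replace (seg x y (1/2)) with (seg x (seg x y t) (1 - 1 / (2 * (1 - t))))
      by (apply functional_extensionality; intro i; unfold seg; field; lra).
    apply int_pts_seg; auto.
    assert (1 / (2 * (1 - t)) <= 1) by (apply Rmult_le_reg_r with (2 * (1 - t)); [lra|];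
      unfold Rdiv; rewrite Rmult_assoc, Rinv_l by lra; lra).
    assert (0 < 1 / (2 * (1 - t))) by (apply Rdiv_lt_0_compat; lra). lra.
Qed.

Definition lex_lt (n : nat) (x y : point) : Prop :=
  exists k, (k < n)%nat /\ (forall i, (i < k)%nat -> x i = y i) /\ x k < y k.

Lemma lex_lt_irrefl n x : ~ lex_lt n x x.
Proof. intros [k [_ [_ H]]]. lra. Qed.

Lemma lex_lt_trans n x y z : lex_lt n x y -> lex_lt n y z -> lex_lt n x z.
Proof.
  intros [k1 [Hk1 [E1 L1]]] [k2 [Hk2 [E2 L2]]].
  exists (Nat.min k1 k2). split; [lia|]. split.
  - intros i Hi. rewrite E1, E2 by lia. reflexivity.
  - destruct (lt_eq_lt_dec k1 k2) as [[C|C]|C].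
    + rewrite Nat.min_l by lia. rewrite <- (E2 k1 C). exact L1.
    + subst. rewrite Nat.min_id. lra.
    + rewrite Nat.min_r by lia. rewrite (E1 k2 C). exact L2.
Qed.

Lemma lex_lt_midl n x y z : lex_lt n x y -> lex_lt n (mid x z) (mid y z).
Proof.
  intros [k [Hk [E L]]]. exists k. unfold mid, seg.
  repeat split; [lia | intros i Hi; rewrite E by exact Hi; reflexivity | lra].
Qed.

Lemma lex_lt_midr n x y z : lex_lt n x y -> lex_lt n (mid z x) (mid z y).
Proof.
  intros [k [Hk [E L]]]. exists k. unfold mid, seg.
  repeat split; [lia | intros i Hi; rewrite E by exact Hi; reflexivity | lra].
Qed.

Lemma first_diff (x y : point) k :
  (exists i, (i < k)%nat /\ x i <> y i) ->
  exists j, (j < k)%nat /\ x j <> y j /\ forall i, (i < j)%nat -> x i = y i.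
Proof.
  induction k as [|k IH]; intros [i [Hi Hd]]; [lia|].
  destruct (classic (exists i, (i < k)%nat /\ x i <> y i)) as [C|C].
  - destruct (IH C) as [j [Hj [Dj Ej]]]. exists j. auto.
  - exists k. split; [lia|]. split.
    + intro E. apply Hd. destruct (Nat.eq_dec i k) as [->|Hik]; [exact E|].
      apply NNPP. intro D. apply C. exists i. split; [lia | exact D].
    + intros j Hj. apply NNPP. intro D. apply C. exists j. auto.
Qed.

Lemma lex_lt_total n x y :
  inRn n x -> inRn n y -> x <> y -> lex_lt n x y \/ lex_lt n y x.
Proof.
  intros Hx Hy Hxy.
  assert (Hdiff : exists i, (i < n)%nat /\ x i <> y i).
  { apply NNPP. intro N. apply Hxy. apply functional_extensionality. intro i.
    destruct (Nat.lt_ge_cases i n) as [Hi|Hi].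
    - apply NNPP. intro D. apply N. exists i. auto.
    - rewrite Hx, Hy by exact Hi. reflexivity. }
  destruct (first_diff x y n Hdiff) as [j [Hj [D E]]].
  destruct (Rtotal_order (x j) (y j)) as [L|[L|L]]; [left | contradiction | right];
    exists j; repeat split; auto.
  intros i Hi. symmetry. auto.
Qed.

Lemma StronglySorted_lex_NoDup n l : StronglySorted (lex_lt n) l -> NoDup l.
Proof.
  induction 1 as [|a l _ IH Ha]; constructor; [|exact IH].
  intro Hin. rewrite Forall_forall in Ha. exact (lex_lt_irrefl n a (Ha a Hin)).
Qed.

Lemma StronglySorted_lex_unique n l1 l2 :
  StronglySorted (lex_lt n) l1 -> StronglySorted (lex_lt n) l2 ->
  (forall x, In x l1 <-> In x l2) -> l1 = l2.
Proof.
  revert l2. induction l1 as [|a t IH]; intros l2 H1 H2 E.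
  - destruct l2 as [|b t']; [reflexivity|].
    destruct (proj2 (E b) (or_introl eq_refl)).
  - destruct l2 as [|b t']; [destruct (proj1 (E a) (or_introl eq_refl))|].
    apply StronglySorted_inv in H1 as [H1 F1]. apply StronglySorted_inv in H2 as [H2 F2].
    rewrite Forall_forall in F1, F2.
    assert (a = b) as <-.
    { destruct (proj1 (E a) (or_introl eq_refl)) as [|Ha]; [auto|].
      destruct (proj2 (E b) (or_introl eq_refl)) as [|Hb]; [auto|].
      destruct (lex_lt_irrefl n a). apply lex_lt_trans with b; auto. }
    f_equal. apply IH; [exact H1 | exact H2|].
    intro x. split; intro Hx.
    + destruct (proj1 (E x) (or_intror Hx)) as [<-|]; [|assumption].
      destruct (lex_lt_irrefl n a (F1 a Hx)).
    + destruct (proj2 (E x) (or_intror Hx)) as [<-|]; [|assumption].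
      destruct (lex_lt_irrefl n a (F2 a Hx)).
Qed.

Lemma lex_insert_sorted n x s :
  inRn n x -> (forall y, In y s -> inRn n y) -> ~ In x s ->
  StronglySorted (lex_lt n) s ->
  exists s', StronglySorted (lex_lt n) s' /\ length s' = S (length s) /\
    (forall y, In y s' <-> y = x \/ In y s).
Proof.
  intros Hx. induction s as [|a s IH]; intros Hs Hn HS.
  - exists [x]. split; [constructor; constructor | split; [reflexivity | simpl; firstorder congruence]].
  - apply StronglySorted_inv in HS as [HS Ha].
    assert (Hxa : x <> a) by (intros ->; apply Hn; left; reflexivity).
    destruct (lex_lt_total n x a Hx (Hs a (or_introl eq_refl)) Hxa) as [L|L].
    + exists (x :: a :: s). split; [|split; [reflexivity | simpl; firstorder congruence]].
      constructor; [constructor; assumption|].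
      constructor; [exact L|].
      rewrite Forall_forall in *. intros z Hz. apply lex_lt_trans with a; auto.
    + destruct IH as [s' [G1 [G2 G3]]];
        [intros; apply Hs; right; assumption | intro; apply Hn; right; assumption | exact HS|].
      exists (a :: s'). split; [|split; [simpl; lia | intro y; simpl; rewrite G3; firstorder congruence]].
      constructor; [exact G1|]. rewrite Forall_forall in *. intros z Hz.
      apply G3 in Hz as [->|Hz]; auto.
Qed.

Lemma lex_sort_exists n l :
  NoDup l -> (forall y, In y l -> inRn n y) ->
  exists s, StronglySorted (lex_lt n) s /\ length s = length l /\
    (forall y, In y s <-> In y l).
Proof.
  induction l as [|x l IH]; intros Hd Hn.
  - exists []. split; [constructor | split; [reflexivity | tauto]].
  - apply NoDup_cons_iff in Hd as [Hx Hd].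
    destruct IH as [s [S1 [S2 S3]]]; [exact Hd | intros; apply Hn; right; assumption|].
    destruct (lex_insert_sorted n x s) as [s' [T1 [T2 T3]]];
      [apply Hn; left; reflexivity | intros y Hy; apply Hn; right; apply S3; exact Hy
      | rewrite S3; exact Hx | exact S1|].
    exists s'. split; [exact T1|]. split; [simpl; lia|].
    intro y. rewrite T3, S3. simpl. firstorder congruence.
Qed.

Fixpoint zigzag (l : list point) : list point :=
  match l with
  | a :: (b :: r) as t =>
      mid a b :: match r with [] => [] | c :: _ => mid a c :: zigzag t end
  | _ => []
  end.

Lemma zigzag_length l : (2 <= length l)%nat -> length (zigzag l) = (2 * length l - 3)%nat.
Proof.
  induction l as [|a t IH]; simpl; intros H; [lia|].
  destruct t as [|b [|c r]]; simpl in *; [lia | reflexivity|].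
  rewrite IH by (simpl; lia). simpl. lia.
Qed.

Lemma zigzag_In l e :
  NoDup l -> In e (zigzag l) -> exists u v, In u l /\ In v l /\ u <> v /\ e = mid u v.
Proof.
  induction l as [|a t IH]; intros Hd He; [destruct He|].
  destruct t as [|b r]; [destruct He|].
  apply NoDup_cons_iff in Hd as [Ha Hd]. simpl in Ha.
  destruct He as [<-|He].
  { exists a, b. repeat split; simpl; auto; intros ->; apply Ha; simpl; auto. }
  destruct r as [|c r]; [destruct He|].
  destruct He as [<-|He].
  { exists a, c. repeat split; simpl; auto; intros ->; apply Ha; simpl; auto. }
  destruct (IH Hd He) as [u [v [Hu [Hv [Huv ->]]]]].
  exists u, v. simpl in *. auto.
Qed.

Lemma zigzag_sorted n l : StronglySorted (lex_lt n) l -> StronglySorted (lex_lt n) (zigzag l).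
Proof.
  induction l as [|a t IH]; intro HS; [constructor|].
  destruct t as [|b [|c r]]; [constructor | repeat constructor|].
  apply StronglySorted_inv in HS as [HS Ha]. specialize (IH HS).
  apply StronglySorted_inv in HS as [_ Hb].
  inversion Ha as [|? ? Hab Ha']; inversion Ha' as [|? ? Hac _]; inversion Hb as [|? ? Hbc _].
  (* mid b c heads the sorted list zigzag (b :: c :: r) and lies above mid a c *)
  assert (Hac_tail : Forall (lex_lt n (mid a c)) (zigzag (b :: c :: r))).
  { change (zigzag (b :: c :: r)) with (mid b c :: tl (zigzag (b :: c :: r))) in IH |- *.
    apply StronglySorted_inv in IH as [_ Htail].
    constructor; [apply lex_lt_midl; exact Hab|].
    eapply Forall_impl; [|exact Htail].
    intros e He. apply lex_lt_trans with (mid b c); [apply lex_lt_midl; exact Hab | exact He]. }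
  change (zigzag (a :: b :: c :: r)) with (mid a b :: mid a c :: zigzag (b :: c :: r)).
  constructor; [constructor; assumption|].
  constructor; [apply lex_lt_midr; exact Hbc|].
  eapply Forall_impl; [|exact Hac_tail].
  intros e He. apply lex_lt_trans with (mid a c); [apply lex_lt_midr; exact Hbc | exact He].
Qed.

Lemma mid_fixed_l x y : mid x y = x -> x = y.
Proof.
  intro E. apply functional_extensionality. intro i.
  apply (f_equal (fun f => f i)) in E. unfold mid, seg in E. lra.
Qed.

Lemma mid_fixed_r x y : mid x y = y -> x = y.
Proof.
  intro E. apply functional_extensionality. intro i.
  apply (f_equal (fun f => f i)) in E. unfold mid, seg in E. lra.
Qed.

Lemma triangle_vertex_of_midpoints a b c a' b' c' :
  mid a b = mid a' b' -> mid a c = mid a' c' -> mid b c = mid b' c' -> a = a'.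
Proof.
  intros E1 E2 E3. apply functional_extensionality. intro i.
  apply (f_equal (fun f => f i)) in E1, E2, E3. unfold mid, seg in *. lra.
Qed.

(* For an integral coordinate z, up z = z + 1: the code records the coordinate parities, flipped. *)
Fixpoint parity_code (x : point) (k : nat) : list bool :=
  match k with O => [] | S k => Z.even (up (x k)) :: parity_code x k end.

Lemma parity_code_length x k : length (parity_code x k) = k.
Proof. induction k; simpl; auto. Qed.

Lemma parity_code_coord k x y : parity_code x k = parity_code y k ->
  forall i, (i < k)%nat -> Z.even (up (x i)) = Z.even (up (y i)).
Proof.
  induction k as [|k IH]; simpl; intros E i Hi; [lia|].
  injection E as Ek E. destruct (Nat.eq_dec i k) as [->|]; [exact Ek | apply IH; [exact E | lia]].
Qed.

Lemma up_IZR z : up (IZR z) = (z + 1)%Z.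
Proof. symmetry. apply tech_up; rewrite plus_IZR; lra. Qed.

Lemma lattice_point_mid n x y : lattice_point n x -> lattice_point n y ->
  parity_code x n = parity_code y n -> lattice_point n (mid x y).
Proof.
  intros [Hx Lx] [Hy Ly] E. split.
  - intros i Hi. unfold mid, seg. rewrite Hx, Hy by exact Hi. ring.
  - intros i Hi. destruct (Lx i Hi) as [z1 E1], (Ly i Hi) as [z2 E2].
    pose proof (parity_code_coord n x y E i Hi) as P. rewrite E1, E2, !up_IZR in P.
    assert (Heven : Z.even (z1 - z2) = true).
    { replace (z1 - z2)%Z with ((z1 + 1) - (z2 + 1))%Z by ring.
      rewrite Z.even_sub, P. destruct (Z.even (z2 + 1)); reflexivity. }
    apply Z.even_spec in Heven as [k Hk].
    exists (z2 + k)%Z. unfold mid, seg. rewrite E1, E2, plus_IZR.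
    replace z1 with (z2 + 2 * k)%Z by lia. rewrite plus_IZR, mult_IZR. lra.
Qed.

Fixpoint bool_lists (k : nat) : list (list bool) :=
  match k with
  | O => [[]]
  | S k => map (cons true) (bool_lists k) ++ map (cons false) (bool_lists k)
  end.

Lemma bool_lists_length k : length (bool_lists k) = (2 ^ k)%nat.
Proof. induction k; simpl; [reflexivity | rewrite length_app, !length_map, IHk; lia]. Qed.

Lemma In_bool_lists k b : length b = k -> In b (bool_lists k).
Proof.
  revert b; induction k as [|k IH]; intros [|x b] Hb; try discriminate; [left; reflexivity|].
  simpl. apply in_or_app. injection Hb as Hb.
  destruct x; [left | right]; apply in_map, IH, Hb.
Qed.

Definition is_class {A B : Type} (P : A -> Prop) (F : A -> B) (c : B) (cl : list A) : Prop :=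
  NoDup cl /\ forall x, In x cl -> P x /\ F x = c.

Section ClassCounting.
Variables (A B : Type) (eq_dec : forall x y : B, {x = y} + {x <> y}) (F : A -> B) (b : nat).

Lemma is_class_impl (P Q : A -> Prop) c cl :
  (forall x, P x -> Q x) -> is_class P F c cl -> is_class Q F c cl.
Proof. intros HPQ [Hd Hcl]. split; [exact Hd|]. intros x Hx. destruct (Hcl x Hx). auto. Qed.

Lemma filter_class_split (P : A -> Prop) c l :
  NoDup l -> (forall x, In x l -> P x) ->
  let f := fun x => if eq_dec (F x) c then true else false in
  is_class P F c (filter f l) /\ NoDup (filter (fun x => negb (f x)) l) /\
  (forall x, In x (filter (fun x => negb (f x)) l) -> P x /\ F x <> c) /\
  length l = (length (filter f l) + length (filter (fun x => negb (f x)) l))%nat.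
Proof.
  intros Hd HP f. split; [split; [apply NoDup_filter, Hd|] | split; [apply NoDup_filter, Hd|split]].
  - intros x Hx. apply filter_In in Hx as [Hx Hf]. unfold f in Hf.
    destruct (eq_dec (F x) c); [auto | discriminate].
  - intros x Hx. apply filter_In in Hx as [Hx Hf]. unfold f in Hf.
    destruct (eq_dec (F x) c); [discriminate | auto].
  - symmetry. apply filter_length.
Qed.

Lemma length_le_classes cs : forall (P : A -> Prop),
  (forall x, P x -> In (F x) cs) ->
  (forall c cl, is_class P F c cl -> (length cl <= b)%nat) ->
  forall l, NoDup l -> (forall x, In x l -> P x) -> (length l <= length cs * b)%nat.
Proof.
  induction cs as [|c cs IH]; intros P Hcs Hb l Hd HP.
  - destruct l as [|x l]; [simpl; lia|]. destruct (Hcs x (HP x (or_introl eq_refl))).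
  - destruct (filter_class_split P c l Hd HP) as [Hc [Hdr [HPr Hlen]]].
    rewrite Hlen. simpl. apply Nat.add_le_mono; [exact (Hb c _ Hc)|].
    apply IH with (P := fun x => P x /\ F x <> c); [| |exact Hdr | exact HPr].
    + intros x [Hx Hxc]. destruct (Hcs x Hx) as [E|]; [congruence | assumption].
    + intros c' cl Hcl. apply (Hb c'). eapply is_class_impl; [|exact Hcl]. intros x [Hx _]. exact Hx.
Qed.

Lemma length_eq_classes_full cs : forall (P : A -> Prop),
  (forall x, P x -> In (F x) cs) ->
  (forall c cl, is_class P F c cl -> (length cl <= b)%nat) ->
  forall l, NoDup l -> (forall x, In x l -> P x) -> length l = (length cs * b)%nat ->
  forall c, In c cs -> exists cl, is_class P F c cl /\ length cl = b.
Proof.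
  induction cs as [|c0 cs IH]; intros P Hcs Hb l Hd HP Hl c Hc; [destruct Hc|].
  destruct (filter_class_split P c0 l Hd HP) as [Hc0 [Hdr [HPr Hlen]]].
  set (P' := fun x => P x /\ F x <> c0).
  assert (Hcs' : forall x, P' x -> In (F x) cs).
  { intros x [Hx Hxc]. destruct (Hcs x Hx) as [E|]; [congruence | assumption]. }
  assert (Hb' : forall c cl, is_class P' F c cl -> (length cl <= b)%nat).
  { intros c' cl Hcl. apply (Hb c'). eapply is_class_impl; [|exact Hcl]. intros x [Hx _]. exact Hx. }
  pose proof (Hb c0 _ Hc0) as Hle0.
  pose proof (length_le_classes cs P' Hcs' Hb' _ Hdr HPr) as Hler.
  simpl in Hl. destruct Hc as [<-|Hc].
  - eexists. split; [exact Hc0 | lia].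
  - destruct (IH P' Hcs' Hb' _ Hdr HPr ltac:(lia) c Hc) as [cl [Hcl Hlcl]].
    exists cl. split; [|exact Hlcl]. eapply is_class_impl; [|exact Hcl]. intros x [Hx _]. exact Hx.
Qed.

End ClassCounting.

Definition lattice_in (n : nat) (S : point -> Prop) (x : point) : Prop :=
  lattice_point n x /\ S x.

Section ParityClasses.
Variables (n : nat) (K : point -> Prop) (gi : nat) (lI : list point).
Hypotheses (HK : convex_body n K) (Hsc : strictly_convex n K)
  (HdI : NoDup lI) (HlenI : length lI = gi)
  (HinI : forall x, In x lI <-> lattice_in n (int_pts n K) x).

Let parity_class (c : list bool) (cl : list point) : Prop :=
  is_class (lattice_in n K) (fun x => parity_code x n) c cl.

Lemma mid_In_interior x y :
  lattice_in n K x -> lattice_in n K y -> x <> y ->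
  parity_code x n = parity_code y n -> In (mid x y) lI.
Proof.
  intros [Lx Kx] [Ly Ky] Hxy E. apply HinI. split.
  - apply lattice_point_mid; assumption.
  - apply strictly_convex_mid_int; assumption.
Qed.

Lemma class_zigzag c cl : parity_class c cl -> (2 <= length cl)%nat ->
  exists s, StronglySorted (lex_lt n) s /\ (forall y, In y s <-> In y cl) /\
    NoDup (zigzag s) /\ length (zigzag s) = (2 * length cl - 3)%nat /\ incl (zigzag s) lI.
Proof.
  intros [Hd Hcl] H2.
  destruct (lex_sort_exists n cl Hd) as [s [Ss [Hlen Hs]]].
  { intros y Hy. apply Hcl in Hy as [[[Hy _] _] _]. exact Hy. }
  exists s. split; [exact Ss|]. split; [exact Hs|].
  split; [exact (StronglySorted_lex_NoDup n _ (zigzag_sorted n s Ss))|].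
  split; [rewrite zigzag_length, Hlen; lia|].
  intros e He.
  destruct (zigzag_In s e (StronglySorted_lex_NoDup n s Ss) He) as [u [v [Hu [Hv [Huv ->]]]]].
  apply Hs, Hcl in Hu as [Pu Cu]. apply Hs, Hcl in Hv as [Pv Cv].
  apply mid_In_interior; [exact Pu | exact Pv | exact Huv | congruence].
Qed.

Lemma parity_class_length c cl : parity_class c cl -> (2 * length cl <= gi + 3)%nat.
Proof.
  intros Hcl. destruct (Nat.lt_ge_cases (length cl) 2) as [|H2]; [lia|].
  destruct (class_zigzag c cl Hcl H2) as [s [_ [_ [Hd [Hlen Hincl]]]]].
  pose proof (NoDup_incl_length Hd Hincl). lia.
Qed.

(* A class attaining the bound has its zigzag midpoints exhausting int K, so its least point is
   recovered from the three least interior lattice points. *)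
Lemma full_parity_classes_eq c1 c2 cl1 cl2 :
  parity_class c1 cl1 -> parity_class c2 cl2 -> (3 <= length cl1)%nat ->
  (2 * length cl1 = gi + 3)%nat -> (2 * length cl2 = gi + 3)%nat -> c1 = c2.
Proof.
  intros Hcl1 Hcl2 H3 Hfull1 Hfull2.
  destruct (class_zigzag c1 cl1 Hcl1 ltac:(lia)) as [s1 [Ss1 [Hs1 [Hd1 [Hlen1 Hincl1]]]]].
  destruct (class_zigzag c2 cl2 Hcl2 ltac:(lia)) as [s2 [Ss2 [Hs2 [Hd2 [Hlen2 Hincl2]]]]].
  assert (Hz : zigzag s1 = zigzag s2).
  { apply (StronglySorted_lex_unique n);
      [apply zigzag_sorted; exact Ss1 | apply zigzag_sorted; exact Ss2|].
    pose proof (NoDup_length_incl (l' := lI) Hd1 ltac:(lia) Hincl1) as E1.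
    pose proof (NoDup_length_incl (l' := lI) Hd2 ltac:(lia) Hincl2) as E2.
    intro x. split; intro Hx; [apply E2, Hincl1, Hx | apply E1, Hincl2, Hx]. }
  destruct s1 as [|a1 [|a2 [|a3 r1]]]; simpl in Hlen1; try lia.
  destruct s2 as [|b1 [|b2 [|b3 r2]]]; simpl in Hlen2; try lia.
  simpl in Hz. injection Hz as E12 E13 E23 _.
  pose proof (triangle_vertex_of_midpoints _ _ _ _ _ _ E12 E13 E23) as <-.
  destruct Hcl1 as [_ Hcl1]. destruct Hcl2 as [_ Hcl2].
  destruct (Hcl1 a1) as [_ <-]; [apply Hs1; left; reflexivity|].
  destruct (Hcl2 a1) as [_ <-]; [apply Hs2; left; reflexivity|].
  reflexivity.
Qed.

Lemma unique_interior_point_class_length p cl :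
  gi = 1%nat -> In p lI -> parity_class (parity_code p n) cl -> (length cl <= 1)%nat.
Proof.
  intros Hgi Hp [Hd Hcl].
  assert (Honly : forall x, In x lI -> x = p).
  { intros x Hx. destruct lI as [|q [|q' l]]; simpl in HlenI, Hp, Hx; try lia.
    destruct Hp as [<-|[]], Hx as [<-|[]]. reflexivity. }
  assert (Pp : lattice_in n K p).
  { apply HinI in Hp as [Lp Ip]. split; [exact Lp | exact (int_pts_sub n K p Ip)]. }
  destruct cl as [|u [|v cl]]; simpl; [lia | lia|]. exfalso.
  apply NoDup_cons_iff in Hd as [Huv _].
  destruct (Hcl u) as [Pu Cu]; [left; reflexivity|].
  destruct (Hcl v) as [Pv Cv]; [right; left; reflexivity|].
  assert (Hmid : mid u v = p).
  { apply Honly, mid_In_interior; [exact Pu | exact Pv | intros ->; apply Huv; left; reflexivity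
    | congruence]. }
  assert (Hup : u <> p).
  { intros ->. apply Huv. left. symmetry. apply mid_fixed_l, Hmid. }
  apply Hup, mid_fixed_r, Honly, mid_In_interior; [exact Pu | exact Pp | exact Hup | exact Cu].
Qed.

Lemma parity_classes_not_all_full : (1 <= n)%nat ->
  ~ (forall c, length c = n -> exists cl, parity_class c cl /\ (2 * length cl = gi + 3)%nat).
Proof.
  intros Hn Hall.
  destruct (Nat.eq_dec gi 1) as [Hgi|Hgi].
  - assert (Hp : exists p, In p lI)
      by (destruct lI as [|p l]; [simpl in HlenI; lia | exists p; left; reflexivity]).
    destruct Hp as [p Hp].
    destruct (Hall (parity_code p n) (parity_code_length p n)) as [cl [Hcl Hlen]].
    pose proof (unique_interior_point_class_length p cl Hgi Hp Hcl). lia.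
  - destruct (Hall (true :: repeat false (n - 1))) as [cl1 [Hcl1 Hl1]];
      [simpl; rewrite repeat_length; lia|].
    destruct (Hall (false :: repeat false (n - 1))) as [cl2 [Hcl2 Hl2]];
      [simpl; rewrite repeat_length; lia|].
    discriminate (full_parity_classes_eq _ _ _ _ Hcl1 Hcl2 ltac:(lia) Hl1 Hl2).
Qed.

Lemma lattice_count_bound lK h r :
  NoDup lK -> (forall x, In x lK <-> lattice_in n K x) -> (1 <= n)%nat ->
  gi = (2 * h + r)%nat -> (r <= 1)%nat -> (length lK + r <= 2 ^ n * (h + r + 1))%nat.
Proof.
  intros HdK HinK Hn Hgi Hr.
  rewrite <- (bool_lists_length n).
  assert (Hcodes : forall x, lattice_in n K x -> In (parity_code x n) (bool_lists n))
    by (intros x _; apply In_bool_lists, parity_code_length).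
  assert (Hb : forall c cl, parity_class c cl -> (length cl <= h + r + 1)%nat)
    by (intros c cl Hcl; pose proof (parity_class_length c cl Hcl); lia).
  assert (HK' : forall x, In x lK -> lattice_in n K x) by (intros x; apply HinK).
  pose proof (length_le_classes _ _ (list_eq_dec Bool.bool_dec) _ _ _ _ Hcodes Hb lK HdK HK')
    as Hle.
  destruct r as [|[|r]]; [lia | | lia].
  enough (length lK <> length (bool_lists n) * (h + 1 + 1))%nat by lia.
  intro Hfull. apply parity_classes_not_all_full; [exact Hn|].
  intros c Hc.
  destruct (length_eq_classes_full _ _ (list_eq_dec Bool.bool_dec) _ _ _ _ Hcodes Hb lK HdK HK' Hfull c
    (In_bool_lists n c Hc)) as [cl [Hcl Hlen]].
  exists cl. split; [exact Hcl | lia].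
Qed.

End ParityClasses.

Lemma Rceil_two_thirds (m : nat) :
  (2 * Z.of_nat m + 2 <= 3 * Rceil (2 / 3 * (INR m + 1)) < 2 * Z.of_nat m + 5)%Z.
Proof.
  unfold Rceil. rewrite INR_IZR_INZ.
  destruct (archimed (- (2 / 3 * (IZR (Z.of_nat m) + 1)))) as [H1 H2].
  split; [apply le_IZR | apply lt_IZR]; rewrite ?plus_IZR, !mult_IZR, ?plus_IZR, minus_IZR; lra.
Qed.

Lemma two_powerRZ_pred n : 2 * (powerRZ 2 (Z.of_nat n - 1) - 1) = INR (2 ^ n) - 2.
Proof.
  rewrite pow_INR. destruct n as [|n]; [simpl; field|].
  replace (Z.of_nat (S n) - 1)%Z with (Z.of_nat n) by lia.
  rewrite <- pow_powerRZ, <- tech_pow_Rmult. replace (INR 2) with 2 by (simpl; ring). ring.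
Qed.

Lemma parity_count_arith N g gi h r :
  (2 <= N)%nat -> gi = (2 * h + r)%nat -> (r <= 1)%nat ->
  (g + r <= N * (h + r + 1))%nat ->
  INR g <= (INR N - 2) * IZR (Rceil (2 / 3 * (INR gi + 1))) + INR gi + 2.
Proof.
  intros HN Hgi Hr Hg.
  pose proof (Rceil_two_thirds gi) as Hz.
  set (z := Rceil (2 / 3 * (INR gi + 1))) in *.
  assert (Hq : INR (h + r + 1) <= IZR z) by (rewrite INR_IZR_INZ; apply IZR_le; lia).
  assert (Hg' : INR (g + 2 * (h + r + 1)) <= INR (N * (h + r + 1) + gi + 2)) by (apply le_INR; lia).
  apply le_INR in HN.
  rewrite !plus_INR, !mult_INR in Hg'. simpl in HN, Hg'.
  assert ((INR N - 2) * INR (h + r + 1) <= (INR N - 2) * IZR z)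
    by (apply Rmult_le_compat_l; lra).
  rewrite !plus_INR in *. simpl in *. lra.
Qed.

Lemma G_eq_R0_le_1 S m : G_eq 0 S m -> (m <= 1)%nat.
Proof.
  intros [l [Hd [<- Hl]]].
  assert (Hincl : incl l [fun _ => 0]).
  { intros x Hx. left. apply functional_extensionality. intro i.
    apply Hl in Hx as [[Hx _] _]. symmetry. apply Hx. lia. }
  exact (NoDup_incl_length Hd Hincl).
Qed.

Theorem theorem1p2 (n : nat) (K : point -> Prop) (g gi : nat) :
  convex_body n K -> strictly_convex n K ->
  G_eq n K g -> G_eq n (int_pts n K) gi ->
  INR g <= 2 * (powerRZ 2 (Z.of_nat n - 1) - 1)
             * IZR (Rceil (2 / 3 * (INR gi + 1))) + INR gi + 2.
Proof.
  intros HK Hsc HG HGi.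
  rewrite two_powerRZ_pred.
  destruct n as [|n].
  - apply G_eq_R0_le_1 in HG, HGi.
    pose proof (Rceil_two_thirds gi) as Hz.
    set (z := Rceil (2 / 3 * (INR gi + 1))) in *.
    assert (Hz' : IZR z <= INR gi + 1) by (rewrite INR_IZR_INZ, <- plus_IZR; apply IZR_le; lia).
    apply le_INR in HG. simpl in *. lra.
  - destruct HG as [lK [HdK [<- HinK]]], HGi as [lI [HdI [HlenI HinI]]].
    pose proof (Nat.div_mod_eq gi 2) as Hgi. pose proof (Nat.mod_upper_bound gi 2) as Hr.
    apply (parity_count_arith _ _ gi (gi / 2) (gi mod 2)); [|lia|lia|].
    { apply (Nat.pow_le_mono_r 2 1 (S n)); lia. }
    apply (lattice_count_bound (S n) K gi lI); auto; lia.
Qed.
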